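(* Let $d>1$ be a non-integer rational number and $\mu\ge\lceil d\rceil -1$ an integer. Then the discounted-sum aggregate function $A\mapsto \mathrm{DS}(A,d)$ on $\{0,\dots,\mu\}^\omega$ is not $\omega$-regular under any integer base $\beta\ge2$.
   Context: $\mathrm{DS}(A,d)=\sum_{i\ge0}A[i]/d^i$. For an integer $\beta\ge2$ and $x\in\mathbb{R}$, $\mathrm{rep}(x,\beta)$ is the $\omega$-word consisting of the sign of $x$ ($+$ if $x\ge0$, $-$ otherwise) followed by the interleaving of $\mathrm{Int}(x,\beta)=z_0z_1\cdots\in\{0,\dots,\beta-1\}^*0^\omega$ and $\mathrm{Frac}(x,\beta)=f_1f_2\cdots\notin\{0,\dots,\beta-1\}^*(\beta-1)^\omega$, the unique words with $|x|=\sum_{i\ge0}z_i\beta^i+\sum_{i\ge1}f_i\beta^{-i}$; its alphabet is $\mathrm{AlphaRep}(\beta)=\{+,-\}\cup\{0,\dots,\beta-1\}$. A function $f:\Sigma^\omega\to\mathbb{R}$ is $\omega$-regular under base $\beta$ if there is a B\''uchi automaton over $\Sigma\times\mathrm{AlphaRep}(\beta)$ that accepts $(A,\mathrm{rep}(x,\beta))$ (read synchronously) iff $f(A)=x$, for all $A\in\Sigma^\omega$, $x\in\mathbb{R}$. *)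

From Stdlib Require Import Reals Lra ZArith Classical ClassicalEpsilon.
Open Scope R_scope.

Definition DS (A : nat -> nat) (d : R) : R :=
  epsilon (inhabits 0) (fun x => infinite_sum (fun i => INR (A i) / d ^ i) x).

Definition Rceil (d : R) : Z := (- Int_part (- d))%Z.

(** The alphabet AlphaRep(beta) = {+,-} u {0,...,beta-1}; digits are Dig n
    (only n < beta ever occur in representations). *)
Inductive ARsym : Type := Plus | Minus | Dig (n : nat).

(** is_rep beta x w : w is rep(x,beta), i.e. w 0 is the sign of x and the
    remaining letters interleave Int(x,beta) = z0 z1 ... and
    Frac(x,beta) = f1 f2 ...:  w = sign z0 f1 z1 f2 z2 f3 ...
    The digit sequence f is indexed from 1 (f 0 is irrelevant). *)
Definition is_rep (beta : nat) (x : R) (w : nat -> ARsym) : Prop :=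
  w 0%nat = (if Rle_dec 0 x then Plus else Minus) /\
  exists (z f : nat -> nat),
    (forall i, (z i < beta)%nat) /\
    (forall i, (f i < beta)%nat) /\
    (exists N, forall i, (N <= i)%nat -> z i = 0%nat) /\
    ~ (exists N, forall i, (N <= i)%nat -> f i = (beta - 1)%nat) /\
    (exists xi xf,
        infinite_sum (fun i => INR (z i) * INR beta ^ i) xi /\
        infinite_sum (fun i => INR (f (S i)) / INR beta ^ (S i)) xf /\
        Rabs x = xi + xf) /\
    (forall k, w (2 * k + 1)%nat = Dig (z k) /\
               w (2 * k + 2)%nat = Dig (f (S k))).

Record Buchi (L : Type) : Type := mkBuchi {
  nstates : nat;
  init : nat -> Prop;
  delta : nat -> L -> nat -> Prop;
  final : nat -> Prop
}.
Arguments nstates {L}. Arguments init {L}. Arguments delta {L}.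
Arguments final {L}.

Definition accepts {L : Type} (B : Buchi L) (w : nat -> L) : Prop :=
  exists r : nat -> nat,
    (forall i, (r i < nstates B)%nat) /\
    init B (r 0%nat) /\
    (forall i, delta B (r i) (w i) (r (S i))) /\
    (forall N, exists i, (N <= i)%nat /\ final B (r i)).

Definition omega_regular (mu : nat) (f : (nat -> nat) -> R) (beta : nat) : Prop :=
  exists B : Buchi (nat * ARsym),
    forall (A : nat -> nat), (forall i, (A i <= mu)%nat) ->
    forall (x : R) (w : nat -> ARsym), is_rep beta x w ->
      (accepts B (fun i => (A i, w i)) <-> f A = x).

(* Suppose a Buchi automaton [B] with [n] states recognizes [DS _ d] in base
   [beta]. For [i <= n] it accepts the pair [(e_(a i), rep (d^-(a i)))], where
   [e_j] is the unit word at position [j]. Two of these accepting runs are in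
   the same state after the first [K] fractional digits, so [B] also accepts
   the spliced pair, which forces a linear identity between [d^-(a i)],
   [d^-(a j)] and the [K]-digit truncations of both. If [d^2 < beta], put the
   units after the cut: the truncations must agree, yet [beta^-K] is smaller
   than the gap between the two values. If [d^2 > beta], put the units before
   the cut: both values are below [beta^-K], the truncations vanish, and
   [d^-(a i) = d^-(a j)]. Finally [d^2 = beta] is impossible for a rational
   non-integer [d]. *)

From Stdlib Require Import Reals Lra Lia ZArith Classical ClassicalEpsilon
  FunctionalExtensionality.
Open Scope R_scope.

(* [partial_sum g n] is the sum of the first [n] terms, unlike [sum_f_R0 g n]
   which has [n + 1] terms. *)
Fixpoint partial_sum (g : nat -> R) (n : nat) : R :=
  match n with O => 0 | S k => partial_sum g k + g k end.

Lemma sum_f_R0_partial_sum g n : sum_f_R0 g n = partial_sum g (S n).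
Proof. induction n as [|n IH]; simpl in *; [lra|]. now rewrite IH. Qed.

Lemma infinite_sum_partial_sum g y :
  (forall eps, eps > 0 -> exists N, forall n, (N <= n)%nat ->
     Rabs (partial_sum g n - y) < eps) ->
  infinite_sum g y.
Proof.
  intros H eps Heps. destruct (H eps Heps) as [N HN]. exists N. intros n Hn.
  rewrite sum_f_R0_partial_sum. apply HN. lia.
Qed.

Lemma infinite_sum_between g y K a b : infinite_sum g y ->
  (forall n, (K <= n)%nat -> a <= partial_sum g n <= b) -> a <= y <= b.
Proof.
  intros Hs Hab.
  assert (Hnear : forall eps, eps > 0 -> exists n, a <= partial_sum g n <= b /\
                    Rabs (partial_sum g n - y) < eps).
  { intros eps Heps. destruct (Hs eps Heps) as [N HN].
    exists (S (Nat.max N K)). split; [apply Hab; lia|].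
    rewrite <- sum_f_R0_partial_sum. apply HN. lia. }
  split; apply Rnot_lt_le; intro Hc.
  - destruct (Hnear (a - y)) as [n [Hn Hy]]; [lra|]. apply Rabs_def2 in Hy. lra.
  - destruct (Hnear (y - b)) as [n [Hn Hy]]; [lra|]. apply Rabs_def2 in Hy. lra.
Qed.

Lemma infinite_sum_eventual_shift g h y K c : infinite_sum g y ->
  (forall n, (K <= n)%nat -> partial_sum h n = partial_sum g n + c) ->
  infinite_sum h (y + c).
Proof.
  intros Hs Hgh eps Heps. destruct (Hs eps Heps) as [N HN]. exists (Nat.max N K).
  intros n Hn. rewrite sum_f_R0_partial_sum, Hgh, <- sum_f_R0_partial_sum by lia.
  unfold Rdist in *. replace (sum_f_R0 g n + c - (y + c)) with (sum_f_R0 g n - y) by ring.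
  apply HN. lia.
Qed.

Lemma partial_sum_le_mono g m n : (forall i, 0 <= g i) -> (m <= n)%nat ->
  partial_sum g m <= partial_sum g n.
Proof. intros Hg Hmn. induction Hmn; [lra|]. simpl. specialize (Hg m0). lra. Qed.

Lemma partial_sum_zero g n : (forall i, (i < n)%nat -> g i = 0) -> partial_sum g n = 0.
Proof.
  intros Hg. induction n as [|n IH]; simpl; [easy|].
  rewrite IH, Hg; [ring | lia | intros; apply Hg; lia].
Qed.

Lemma inv_pow_vanishes b eps : 1 < b -> 0 < eps ->
  exists N, forall n, (N <= n)%nat -> / b ^ n < eps.
Proof.
  intros Hb Heps. destruct (pow_lt_1_zero (/ b)) with (y := eps) as [N HN]; auto.
  { rewrite Rabs_pos_eq by (left; apply Rinv_0_lt_compat; lra).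
    rewrite <- Rinv_1. apply Rinv_0_lt_contravar; lra. }
  exists N. intros n Hn. specialize (HN n Hn). rewrite <- pow_inv.
  rewrite Rabs_pos_eq in HN; [easy|]. apply pow_le. left; apply Rinv_0_lt_compat; lra.
Qed.

Lemma pow_ratio_unbounded u v C K0 : 0 < u < v ->
  exists K, (K0 <= K)%nat /\ C * u ^ K < v ^ K.
Proof.
  intros Huv. destruct (Pow_x_infinity (v / u)) with (b := C + 1) as [N HN].
  { rewrite Rabs_pos_eq; [|apply Rlt_le, Rdiv_lt_0_compat; lra].
    apply Rlt_gt, Rmult_lt_reg_r with u; [lra|]. field_simplify; lra. }
  exists (Nat.max N K0). split; [lia|]. specialize (HN (Nat.max N K0) ltac:(lia)).
  rewrite Rabs_pos_eq in HN by (apply pow_le, Rlt_le, Rdiv_lt_0_compat; lra).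
  unfold Rdiv in HN. rewrite Rpow_mult_distr, pow_inv in HN.
  assert (Hu : 0 < u ^ Nat.max N K0) by (apply pow_lt; lra).
  apply Rge_le, (Rmult_le_compat_r (u ^ Nat.max N K0)) in HN; [|lra].
  rewrite Rmult_assoc, Rinv_l in HN by lra. nra.
Qed.

Lemma inv_pow_le_antimono d m n : 1 <= d -> (m <= n)%nat -> / d ^ n <= / d ^ m.
Proof.
  intros Hd Hmn. apply Rinv_le_contravar; [apply pow_lt; lra|]. now apply Rle_pow.
Qed.

Lemma inv_pow_sub_lower d m n : 1 < d -> (m < n)%nat -> (d - 1) / d ^ S m <= / d ^ m - / d ^ n.
Proof.
  intros Hd Hmn. pose proof (inv_pow_le_antimono d (S m) n ltac:(lra) Hmn).
  assert (0 < d ^ m) by (apply pow_lt; lra).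
  replace ((d - 1) / d ^ S m) with (/ d ^ m - / d ^ S m) by (simpl; field; lra). lra.
Qed.

Lemma pow_sq_mult d K : (d * d) ^ K = d ^ (2 * K).
Proof. rewrite Rpow_mult_distr, <- pow_add. f_equal. lia. Qed.

Definition splice {T : Type} (u v : nat -> T) (p : nat) (k : nat) : T :=
  if (k <? p)%nat then u k else v k.

Lemma splice_l {T : Type} (u v : nat -> T) p k : (k < p)%nat -> splice u v p k = u k.
Proof. intros Hk. unfold splice. now destruct (Nat.ltb_spec k p); [|lia]. Qed.

Lemma splice_r {T : Type} (u v : nat -> T) p k : (p <= k)%nat -> splice u v p k = v k.
Proof. intros Hk. unfold splice. now destruct (Nat.ltb_spec k p); [lia|]. Qed.

(* The word [+ 0 f1 0 f2 0 f3 ...], i.e. [rep] of the number in [[0, 1)]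
   with fractional digits [f]. *)
Definition frac_word (f : nat -> nat) (n : nat) : ARsym :=
  match n with
  | O => Plus
  | S m => if Nat.even m then Dig 0 else Dig (f (S (Nat.div2 m)))
  end.

Lemma frac_word_int f k : frac_word f (2 * k + 1) = Dig 0.
Proof.
  replace (2 * k + 1)%nat with (S (2 * k)) by lia. unfold frac_word. now rewrite Nat.even_mul.
Qed.

Lemma frac_word_frac f k : frac_word f (2 * k + 2) = Dig (f (S k)).
Proof.
  replace (2 * k + 2)%nat with (S (S (2 * k))) by lia. unfold frac_word.
  now rewrite Nat.div2_succ_double, Nat.even_succ, Nat.odd_mul.
Qed.

Lemma frac_word_splice f g K k :
  frac_word (splice f g (S K)) k = splice (frac_word f) (frac_word g) (2 * K + 1) k.
Proof.
  destruct k as [|m]; [unfold splice; now destruct (0 <? 2 * K + 1)%nat|].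
  destruct (Nat.Even_or_Odd m) as [[t ->]|[t ->]].
  - replace (S (2 * t)) with (2 * t + 1)%nat by lia.
    unfold splice. destruct (2 * t + 1 <? 2 * K + 1)%nat; now rewrite !frac_word_int.
  - replace (S (2 * t + 1)) with (2 * t + 2)%nat by lia. rewrite !frac_word_frac.
    destruct (Nat.lt_ge_cases t K).
    + rewrite !splice_l by lia. now rewrite frac_word_frac.
    + rewrite !splice_r by lia. now rewrite frac_word_frac.
Qed.

Section Expansions.

Variable beta : nat.
Hypothesis Hbeta : (2 <= beta)%nat.

Let Hbeta_R : 2 <= INR beta.
Proof. apply (le_INR 2). exact Hbeta. Qed.

Definition frac_term (f : nat -> nat) (i : nat) : R := INR (f (S i)) / INR beta ^ S i.

Definition admissible (f : nat -> nat) : Prop :=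
  (forall k, (f k < beta)%nat) /\
  ~ (exists N, forall i, (N <= i)%nat -> f i = (beta - 1)%nat).

Lemma frac_term_nonneg f i : 0 <= frac_term f i.
Proof.
  apply Rmult_le_pos; [apply pos_INR|]. left; apply Rinv_0_lt_compat, pow_lt; lra.
Qed.

(* Greedy expansion: digit [k] of [x] is [floor (beta^k x) - beta floor (beta^(k-1) x)]. *)
Definition scaled_floor (x : R) (k : nat) : Z := Int_part (INR beta ^ k * x).

Lemma scaled_floor_bounds x k :
  IZR (scaled_floor x k) <= INR beta ^ k * x < IZR (scaled_floor x k) + 1.
Proof. unfold scaled_floor. destruct (base_Int_part (INR beta ^ k * x)). lra. Qed.

Lemma scaled_floor_succ x k :
  (Z.of_nat beta * scaled_floor x k <= scaled_floor x (S k)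
     < Z.of_nat beta * (scaled_floor x k + 1))%Z.
Proof.
  pose proof (scaled_floor_bounds x k) as [H1 H2].
  pose proof (scaled_floor_bounds x (S k)) as [H3 H4].
  simpl pow in H3, H4. rewrite Rmult_assoc in H3, H4. pose proof Hbeta_R.
  set (y := INR beta ^ k * x) in *.
  split.
  - apply Zlt_succ_le, lt_IZR. rewrite succ_IZR, mult_IZR, <- INR_IZR_INZ.
    apply Rle_lt_trans with (INR beta * y); [apply Rmult_le_compat_l|]; lra.
  - apply lt_IZR. rewrite mult_IZR, plus_IZR, <- INR_IZR_INZ.
    apply Rle_lt_trans with (INR beta * y); [lra|]. apply Rmult_lt_compat_l; lra.
Qed.

Definition frac_digit (x : R) (k : nat) : nat :=
  match k with
  | O => O
  | S k' => Z.to_nat (scaled_floor x (S k') - Z.of_nat beta * scaled_floor x k')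
  end.

Lemma frac_digit_succ x k :
  INR (frac_digit x (S k)) = IZR (scaled_floor x (S k)) - INR beta * IZR (scaled_floor x k).
Proof.
  simpl. pose proof (scaled_floor_succ x k).
  rewrite INR_IZR_INZ, Z2Nat.id by lia. rewrite minus_IZR, mult_IZR, <- INR_IZR_INZ. ring.
Qed.

Lemma frac_digit_lt x k : (frac_digit x k < beta)%nat.
Proof. destruct k; simpl; [lia|]. pose proof (scaled_floor_succ x k). lia. Qed.

Lemma scaled_floor_0 x : 0 <= x < 1 -> scaled_floor x 0 = 0%Z.
Proof.
  intros Hx. pose proof (scaled_floor_bounds x 0) as [H1 H2]. simpl in *.
  assert (IZR (scaled_floor x 0) < IZR 1) by (simpl; lra).
  assert (IZR (-1) < IZR (scaled_floor x 0)) by (simpl; lra).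
  apply lt_IZR in H. apply lt_IZR in H0. lia.
Qed.

Lemma partial_sum_frac_digit x N : 0 <= x < 1 ->
  partial_sum (frac_term (frac_digit x)) N = IZR (scaled_floor x N) / INR beta ^ N.
Proof.
  intros Hx. pose proof Hbeta_R. induction N as [|N IH]; simpl.
  - rewrite scaled_floor_0 by easy. simpl. field.
  - rewrite IH. unfold frac_term. rewrite frac_digit_succ. simpl. field.
    split; [apply pow_nonzero|]; lra.
Qed.

Lemma infinite_sum_frac_digit x : 0 <= x < 1 ->
  infinite_sum (frac_term (frac_digit x)) x.
Proof.
  intros Hx. pose proof Hbeta_R. apply infinite_sum_partial_sum. intros eps Heps.
  destruct (inv_pow_vanishes (INR beta) eps) as [N HN]; [lra|easy|].
  exists N. intros n Hn. rewrite partial_sum_frac_digit by easy. specialize (HN n Hn).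
  pose proof (scaled_floor_bounds x n) as [H1 H2].
  assert (HP : 0 < INR beta ^ n) by (apply pow_lt; lra).
  assert (IZR (scaled_floor x n) / INR beta ^ n <= x).
  { apply Rmult_le_reg_l with (INR beta ^ n); auto. field_simplify; lra. }
  assert (x - IZR (scaled_floor x n) / INR beta ^ n < / INR beta ^ n).
  { apply Rmult_lt_reg_l with (INR beta ^ n); auto. field_simplify; lra. }
  rewrite Rabs_left1 by lra. lra.
Qed.

(* A tail of maximal digits from position [M + 1] on would force
   [beta^(M+t) x >= beta^t (floor (beta^M x) + 1) - 1] for all [t],
   i.e. [x >= (floor (beta^M x) + 1) / beta^M], which is false. *)
Lemma frac_digit_not_eventually_max x :
  ~ (exists N, forall i, (N <= i)%nat -> frac_digit x i = (beta - 1)%nat).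
Proof.
  intros [N HN]. pose proof Hbeta_R. set (M := S N).
  assert (Hrec : forall t, IZR (scaled_floor x (M + t)) + 1
                           = INR beta ^ t * (IZR (scaled_floor x M) + 1)).
  { induction t as [|t IH].
    - rewrite Nat.add_0_r. simpl. ring.
    - rewrite Nat.add_succ_r. pose proof (frac_digit_succ x (M + t)) as E.
      rewrite HN, minus_INR in E by lia. simpl pow. rewrite Rmult_assoc, <- IH.
      simpl INR in E. lra. }
  pose proof (scaled_floor_bounds x M) as [_ H2].
  assert (HP : 0 < INR beta ^ M) by (apply pow_lt; lra).
  set (gap := (IZR (scaled_floor x M) + 1) / INR beta ^ M - x).
  assert (Hgap : 0 < gap).
  { unfold gap. apply Rlt_0_minus. apply Rmult_lt_reg_l with (INR beta ^ M); auto.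
    field_simplify; lra. }
  destruct (inv_pow_vanishes (INR beta) gap) as [T HT]; [lra|easy|].
  specialize (HT (M + T)%nat ltac:(lia)).
  pose proof (scaled_floor_bounds x (M + T)) as [H3 _].
  rewrite pow_add in H3, HT. specialize (Hrec T).
  assert (HQ : 0 < INR beta ^ T) by (apply pow_lt; lra).
  unfold gap in HT.
  assert (x >= (IZR (scaled_floor x M) + 1) / INR beta ^ M
               - / (INR beta ^ M * INR beta ^ T)).
  { apply Rle_ge, Rmult_le_reg_r with (INR beta ^ M * INR beta ^ T); [nra|].
    field_simplify; lra. }
  lra.
Qed.

Lemma admissible_expansion_exists x : 0 <= x < 1 ->
  exists f, admissible f /\ infinite_sum (frac_term f) x.
Proof.
  intros Hx. exists (frac_digit x). repeat split.
  - apply frac_digit_lt.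
  - apply frac_digit_not_eventually_max.
  - now apply infinite_sum_frac_digit.
Qed.

Lemma partial_sum_frac_tail f K t : (forall k, (f k < beta)%nat) ->
  partial_sum (frac_term f) (K + t)
    <= partial_sum (frac_term f) K + / INR beta ^ K - / INR beta ^ (K + t).
Proof.
  intros Hf. pose proof Hbeta_R. induction t as [|t IH].
  - rewrite Nat.add_0_r. lra.
  - rewrite Nat.add_succ_r. simpl partial_sum. unfold frac_term at 2.
    assert (INR (f (S (K + t))) <= INR beta - 1).
    { rewrite <- (minus_INR _ 1) by lia. apply le_INR. specialize (Hf (S (K + t))). lia. }
    assert (HP : 0 < INR beta ^ (K + t)) by (apply pow_lt; lra).
    assert (INR (f (S (K + t))) / INR beta ^ S (K + t)
              <= / INR beta ^ (K + t) - / INR beta ^ S (K + t)).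
    { simpl pow. apply Rmult_le_reg_l with (INR beta * INR beta ^ (K + t)); [nra|].
      field_simplify; lra. }
    lra.
Qed.

Lemma frac_value_bounds f y K : (forall k, (f k < beta)%nat) ->
  infinite_sum (frac_term f) y ->
  partial_sum (frac_term f) K <= y
    <= partial_sum (frac_term f) K + / INR beta ^ K.
Proof.
  intros Hf Hs. pose proof Hbeta_R. apply (infinite_sum_between (frac_term f) y K); [easy|].
  intros n Hn. split.
  - apply partial_sum_le_mono; [apply frac_term_nonneg|easy].
  - replace n with (K + (n - K))%nat by lia.
    pose proof (partial_sum_frac_tail f K (n - K) Hf).
    assert (0 < / INR beta ^ (K + (n - K))) by (apply Rinv_0_lt_compat, pow_lt; lra).
    lra.
Qed.

Lemma frac_prefix_zero f y K : (forall k, (f k < beta)%nat) ->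
  infinite_sum (frac_term f) y -> y < / INR beta ^ K ->
  partial_sum (frac_term f) K = 0.
Proof.
  intros Hf Hs Hy. pose proof Hbeta_R.
  pose proof (frac_value_bounds f y K Hf Hs) as [HK _].
  apply partial_sum_zero. intros i Hi.
  assert (Hterm : frac_term f i < / INR beta ^ S i).
  { apply Rle_lt_trans with (partial_sum (frac_term f) K).
    - pose proof (partial_sum_le_mono (frac_term f) (S i) K
                    (frac_term_nonneg f) Hi).
      pose proof (partial_sum_le_mono (frac_term f) 0 i
                    (frac_term_nonneg f) ltac:(lia)).
      simpl in *. lra.
    - apply Rlt_le_trans with (/ INR beta ^ K); [lra|].
      apply Rinv_le_contravar; [apply pow_lt; lra|]. apply Rle_pow; [lra|lia]. }
  unfold frac_term in *. destruct (f (S i)) as [|n]; [simpl; lra|].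
  exfalso. assert (HP : 0 < / INR beta ^ S i) by (apply Rinv_0_lt_compat, pow_lt; lra).
  assert (1 <= INR (S n)) by (apply (le_INR 1); lia).
  unfold Rdiv in Hterm. nra.
Qed.

Lemma is_rep_frac_word f y : admissible f ->
  infinite_sum (frac_term f) y -> is_rep beta y (frac_word f).
Proof.
  intros [Hf Hmax] Hs.
  assert (Hy : 0 <= y) by (pose proof (frac_value_bounds f y 0 Hf Hs); simpl in *; lra).
  split; [simpl; now destruct (Rle_dec 0 y)|].
  exists (fun _ => 0%nat), f. repeat split; try easy.
  - intros; lia.
  - now exists 0%nat.
  - exists 0, y. repeat split; [|easy|now rewrite Rabs_pos_eq, Rplus_0_l].
    apply infinite_sum_partial_sum. intros eps Heps. exists 0%nat. intros n _.
    rewrite partial_sum_zero by (intros; simpl; ring). rewrite Rminus_0_r, Rabs_R0. lra.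
  - apply frac_word_int.
  - apply frac_word_frac.
Qed.

Lemma partial_sum_splice f g K n : (K <= n)%nat ->
  partial_sum (frac_term (splice f g (S K))) n
    = partial_sum (frac_term g) n
      + (partial_sum (frac_term f) K - partial_sum (frac_term g) K).
Proof.
  intros Hn.
  assert (Hpre : forall t, (t <= K)%nat ->
            partial_sum (frac_term (splice f g (S K))) t = partial_sum (frac_term f) t).
  { induction t as [|t IH]; intros Ht; simpl; [easy|]. rewrite IH by lia.
    unfold frac_term. now rewrite splice_l by lia. }
  induction Hn as [|n Hn IH].
  - rewrite Hpre; [ring|lia].
  - simpl. rewrite IH.
    replace (frac_term (splice f g (S K)) n) with (frac_term g n); [ring|].
    unfold frac_term. now rewrite splice_r by lia.
Qed.

Lemma admissible_splice f g p : (forall k, (f k < beta)%nat) -> admissible g ->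
  admissible (splice f g p).
Proof.
  intros Hf [Hg Hmax]. split.
  - intros k; unfold splice; destruct (k <? p)%nat; auto.
  - intros [N HN]. apply Hmax. exists (Nat.max N p). intros i Hi.
    rewrite <- (splice_r f g p i) by lia. apply HN. lia.
Qed.

Lemma infinite_sum_splice f g y K : infinite_sum (frac_term g) y ->
  infinite_sum (frac_term (splice f g (S K)))
    (y + (partial_sum (frac_term f) K - partial_sum (frac_term g) K)).
Proof.
  intros Hs. apply (infinite_sum_eventual_shift (frac_term g) _ _ K); [easy|].
  apply partial_sum_splice.
Qed.

End Expansions.

Lemma pigeonhole m (s : nat -> nat) : (forall i, (i <= m)%nat -> (s i < m)%nat) ->
  exists i j, (i < j <= m)%nat /\ s i = s j.
Proof.
  revert s. induction m as [|m IH]; intros s Hs; [specialize (Hs 0%nat); lia|].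
  destruct (classic (exists i, (i <= m)%nat /\ s i = s (S m))) as [[i [Hi E]]|Hnew].
  { exists i, (S m). split; [lia|easy]. }
  assert (Hne : forall i, (i <= m)%nat -> s i <> s (S m))
    by (intros i Hi E; apply Hnew; now exists i).
  (* Shifting the values above [s (S m)] down by one leaves at most [m] values. *)
  destruct (IH (fun i => if (s i <? s (S m))%nat then s i else (s i - 1)%nat)) as [i [j [Hij E]]].
  - intros i Hi. specialize (Hne i Hi). pose proof (Hs i ltac:(lia)).
    pose proof (Hs (S m) ltac:(lia)).
    destruct (Nat.ltb_spec (s i) (s (S m))); lia.
  - exists i, j. split; [lia|]. pose proof (Hne i ltac:(lia)). pose proof (Hne j ltac:(lia)).
    destruct (Nat.ltb_spec (s i) (s (S m))), (Nat.ltb_spec (s j) (s (S m))); lia.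
Qed.

Definition accepting_run {L : Type} (B : Buchi L) (w : nat -> L) (r : nat -> nat) : Prop :=
  (forall i, (r i < nstates B)%nat) /\
  init B (r 0%nat) /\
  (forall i, delta B (r i) (w i) (r (S i))) /\
  (forall N, exists i, (N <= i)%nat /\ final B (r i)).

Lemma accepts_ext {L : Type} (B : Buchi L) w1 w2 :
  (forall k, w1 k = w2 k) -> accepts B w1 -> accepts B w2.
Proof.
  intros E [r [H1 [H2 [H3 H4]]]]. exists r. repeat split; auto.
  intros i; rewrite <- E; auto.
Qed.

Lemma accepting_run_splice {L : Type} (B : Buchi L) w1 w2 r1 r2 p :
  accepting_run B w1 r1 -> accepting_run B w2 r2 -> r1 p = r2 p ->
  accepting_run B (splice w1 w2 p) (splice r1 r2 p).
Proof.
  intros [R1 [I1 [D1 F1]]] [R2 [I2 [D2 F2]]] Ep. repeat split.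
  - intros t. unfold splice. destruct (t <? p)%nat; auto.
  - destruct (Nat.lt_ge_cases 0 p); [rewrite splice_l | rewrite splice_r]; easy.
  - intros t. destruct (Nat.lt_ge_cases t p) as [Ht|Ht].
    + rewrite !splice_l by easy.
      destruct (Nat.lt_ge_cases (S t) p); [now rewrite splice_l|].
      rewrite splice_r by easy. replace (S t) with p by lia. rewrite <- Ep.
      replace p with (S t) by lia. apply D1.
    + rewrite !splice_r by lia. apply D2.
  - intros N. destruct (F2 (Nat.max N p)) as [t [Ht Hf]]. exists t.
    rewrite splice_r by lia. split; [lia|easy].
Qed.

(* Among [nstates B + 1] accepted words, two accepting runs share their state
   at time [p], so the two words can be cut and glued there. *)
Lemma accepts_splice {L : Type} (B : Buchi L) (w : nat -> nat -> L) p :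
  (forall i, (i <= nstates B)%nat -> accepts B (w i)) ->
  exists i j, (i < j <= nstates B)%nat /\ accepts B (splice (w i) (w j) p).
Proof.
  intros Hacc.
  set (run := fun i => epsilon (inhabits (fun _ : nat => 0%nat)) (accepting_run B (w i))).
  assert (Hrun : forall i, (i <= nstates B)%nat -> accepting_run B (w i) (run i))
    by (intros i Hi; apply epsilon_spec, Hacc, Hi).
  destruct (pigeonhole (nstates B) (fun i => run i p)) as [i [j [Hij E]]].
  { intros i Hi. apply (Hrun i Hi). }
  exists i, j. split; [easy|]. exists (splice (run i) (run j) p).
  apply accepting_run_splice; [apply Hrun; lia|apply Hrun; lia|easy].
Qed.

Lemma DS_ext A A' d : (forall k, A k = A' k) -> DS A d = DS A' d.
Proof.
  intros E. now replace A' with A by (apply functional_extensionality; exact E).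
Qed.

Definition unit_word (j : nat) (i : nat) : nat := if Nat.eqb i j then 1%nat else 0%nat.

Lemma partial_sum_unit_word d j n : 1 < d -> (j < n)%nat ->
  partial_sum (fun i => INR (unit_word j i) / d ^ i) n = / d ^ j.
Proof.
  intros Hd Hn. induction Hn as [|n Hn IH]; simpl.
  - rewrite partial_sum_zero.
    + unfold unit_word. rewrite Nat.eqb_refl. simpl. field. apply pow_nonzero. lra.
    + intros i Hi. unfold unit_word. rewrite (proj2 (Nat.eqb_neq i j)) by lia. simpl. lra.
  - rewrite IH. unfold unit_word. rewrite (proj2 (Nat.eqb_neq n j)) by lia. simpl. lra.
Qed.

Lemma DS_unit_word d j : 1 < d -> DS (unit_word j) d = / d ^ j.
Proof.
  intros Hd.
  assert (Hs : infinite_sum (fun i => INR (unit_word j i) / d ^ i) (/ d ^ j)).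
  { apply infinite_sum_partial_sum. intros eps Heps. exists (S j). intros n Hn.
    rewrite partial_sum_unit_word by (lia || lra). rewrite Rminus_diag, Rabs_R0. lra. }
  unfold DS. apply (uniqueness_sum (fun i => INR (unit_word j i) / d ^ i)); [|easy].
  apply epsilon_spec. now exists (/ d ^ j).
Qed.

Lemma splice_unit_word_late a b p k : (p <= a)%nat -> (p <= b)%nat ->
  splice (unit_word a) (unit_word b) p k = unit_word b k.
Proof.
  intros Ha Hb. destruct (Nat.lt_ge_cases k p); [|now rewrite splice_r].
  rewrite splice_l by easy. unfold unit_word.
  now rewrite (proj2 (Nat.eqb_neq k a)), (proj2 (Nat.eqb_neq k b)) by lia.
Qed.

Lemma splice_unit_word_early a b p k : (a < p)%nat -> (b < p)%nat ->
  splice (unit_word a) (unit_word b) p k = unit_word a k.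
Proof.
  intros Ha Hb. destruct (Nat.lt_ge_cases k p); [now rewrite splice_l|].
  rewrite splice_r by easy. unfold unit_word.
  now rewrite (proj2 (Nat.eqb_neq k a)), (proj2 (Nat.eqb_neq k b)) by lia.
Qed.

Lemma rational_sqrt_integral d m : (exists p q, (q <> 0)%Z /\ d = IZR p / IZR q) ->
  d * d = IZR m -> exists n, d = IZR n.
Proof.
  intros [p [q [Hq ->]]] Hsq.
  assert (Hq' : IZR q <> 0) by (apply not_0_IZR, Hq).
  set (g := Z.gcd p q).
  assert (Hg : g <> 0%Z) by (unfold g; intro H; apply Z.gcd_eq_0 in H; lia).
  destruct (Z.gcd_divide_l p q) as [p' Hp]. destruct (Z.gcd_divide_r p q) as [q' Hq2].
  fold g in Hp, Hq2.
  assert (Hcop : Z.gcd p' q' = 1%Z).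
  { replace p' with (p / g)%Z by (rewrite Hp, Z.div_mul; auto).
    replace q' with (q / g)%Z by (rewrite Hq2, Z.div_mul; auto).
    now apply Z.gcd_div_gcd. }
  assert (E : (p' * p' = m * q' * q')%Z).
  { assert (Hnz : IZR q' <> 0 /\ IZR g <> 0)
      by (split; intro H0; apply Hq'; rewrite Hq2, mult_IZR, H0; ring).
    apply (Z.mul_reg_r _ _ (g * g)); [nia|]. apply eq_IZR.
    rewrite Hp, Hq2, !mult_IZR in Hsq. rewrite !mult_IZR, <- Hsq. field. easy. }
  (* [q'] divides [p' * p'] and is coprime to [p'], hence is a unit. *)
  assert (Hunit : (q' | 1)%Z).
  { rewrite <- Hcop. apply Z.gcd_greatest; [|apply Z.divide_refl].
    apply (Z.gauss _ p'); [exists (m * q')%Z; lia|now rewrite Z.gcd_comm]. }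
  assert (Hg' : IZR g <> 0) by (apply not_0_IZR, Hg).
  apply Z.divide_1_r in Hunit as [H1|H1]; [exists p' | exists (- p')%Z];
    rewrite Hp, Hq2, H1, ?opp_IZR, !mult_IZR; field; exact Hg'.
Qed.

Lemma Rceil_ge_2 d : 1 < d -> (2 <= Rceil d)%Z.
Proof.
  intros Hd. unfold Rceil. pose proof (base_Int_part (- d)) as [H _].
  assert (IZR (Int_part (- d)) < IZR (-1)) by (simpl; lra).
  apply lt_IZR in H0. lia.
Qed.

Lemma exists_resolution_below_gap d b n : 1 < d -> d * d < b ->
  exists K, / b ^ K < (d - 1) / d ^ (2 * K + 2 + n).
Proof.
  intros Hd Hb.
  destruct (pow_ratio_unbounded (d * d) b (d ^ (n + 2) / (d - 1)) 0) as [K [_ HK]]; [nra|].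
  exists K. rewrite pow_sq_mult in HK.
  replace (2 * K + 2 + n)%nat with (n + 2 + 2 * K)%nat by lia. rewrite pow_add.
  assert (0 < d ^ (n + 2)) by (apply pow_lt; lra).
  assert (0 < d ^ (2 * K)) by (apply pow_lt; lra).
  assert (0 < b ^ K) by (apply pow_lt; nra).
  assert (Hprod : d ^ (n + 2) * d ^ (2 * K) < (d - 1) * b ^ K).
  { replace (d ^ (n + 2) * d ^ (2 * K)) with ((d - 1) * (d ^ (n + 2) / (d - 1) * d ^ (2 * K)))
      by (field; lra).
    apply Rmult_lt_compat_l; lra. }
  apply Rmult_lt_reg_r with (b ^ K * (d ^ (n + 2) * d ^ (2 * K)));
    [repeat apply Rmult_lt_0_compat; lra|].
  field_simplify; [lra|split|]; lra.
Qed.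

Lemma exists_resolution_above_scale d b n : 1 < d -> 0 < b < d * d ->
  exists K, (n < K)%nat /\ / d ^ (2 * K - n) < / b ^ K.
Proof.
  intros Hd Hb.
  destruct (pow_ratio_unbounded b (d * d) (d ^ n) (S n)) as [K [HnK HK]]; [lra|].
  exists K. split; [lia|]. rewrite pow_sq_mult in HK.
  replace (2 * K)%nat with (n + (2 * K - n))%nat in HK by lia. rewrite pow_add in HK.
  assert (0 < d ^ n) by (apply pow_lt; lra).
  apply Rinv_0_lt_contravar; [apply pow_lt; lra|]. nra.
Qed.

Section Recognizer.

Variables (d : R) (mu beta : nat) (B : Buchi (nat * ARsym)).
Hypothesis Hd : 1 < d.
Hypothesis Hmu : (1 <= mu)%nat.
Hypothesis Hbeta : (2 <= beta)%nat.
Hypothesis HB : forall A : nat -> nat, (forall i, (A i <= mu)%nat) ->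
  forall (x : R) (w : nat -> ARsym), is_rep beta x w ->
    (accepts B (fun i => (A i, w i)) <-> DS A d = x).

Let n := nstates B.

Lemma unit_word_bounded j i : (unit_word j i <= mu)%nat.
Proof. unfold unit_word. destruct (Nat.eqb i j); lia. Qed.

Lemma DS_splice_unit_words (a : nat -> nat) K :
  (forall i, (i <= n)%nat -> (1 <= a i)%nat) ->
  exists i j fi fj, (i < j <= n)%nat /\
    (forall k, (fi k < beta)%nat) /\ (forall k, (fj k < beta)%nat) /\
    infinite_sum (frac_term beta fi) (/ d ^ a i) /\
    infinite_sum (frac_term beta fj) (/ d ^ a j) /\
    DS (splice (unit_word (a i)) (unit_word (a j)) (2 * K + 1)) d
      = / d ^ a j + (partial_sum (frac_term beta fi) K - partial_sum (frac_term beta fj) K).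
Proof.
  intros Ha.
  assert (HX : forall i, (i <= n)%nat -> 0 <= / d ^ a i < 1).
  { intros i Hi. pose proof (Rle_pow d 1 (a i) ltac:(lra) (Ha i Hi)). rewrite pow_1 in *.
    split; [left; apply Rinv_0_lt_compat; lra|].
    rewrite <- Rinv_1. apply Rinv_0_lt_contravar; lra. }
  set (digits := fun i => epsilon (inhabits (fun _ : nat => 0%nat))
                   (fun f => admissible beta f /\ infinite_sum (frac_term beta f) (/ d ^ a i))).
  assert (Hdigits : forall i, (i <= n)%nat ->
            admissible beta (digits i) /\ infinite_sum (frac_term beta (digits i)) (/ d ^ a i)).
  { intros i Hi. apply epsilon_spec, admissible_expansion_exists; [easy|]. now apply HX. }
  set (w := fun i k => (unit_word (a i) k, frac_word (digits i) k)).
  destruct (accepts_splice B w (2 * K + 1)) as [i [j [Hij Hacc]]].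
  { intros i Hi. destruct (Hdigits i Hi) as [Hadm Hs].
    apply (HB _ (unit_word_bounded (a i)) (/ d ^ a i)); [now apply is_rep_frac_word|].
    now apply DS_unit_word. }
  destruct (Hdigits i ltac:(lia)) as [[Hfi _] Hsi].
  destruct (Hdigits j ltac:(lia)) as [Hadmj Hsj].
  exists i, j, (digits i), (digits j). repeat split; try easy; [apply Hadmj|].
  assert (Hbound : forall k, (splice (unit_word (a i)) (unit_word (a j)) (2 * K + 1) k <= mu)%nat)
    by (intros k; unfold splice; destruct (k <? 2 * K + 1)%nat; apply unit_word_bounded).
  apply (HB _ Hbound _ (frac_word (splice (digits i) (digits j) (S K)))).
  - apply is_rep_frac_word; [easy| |now apply infinite_sum_splice].
    now apply admissible_splice.
  - apply (accepts_ext B (splice (w i) (w j) (2 * K + 1))); [|exact Hacc].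
    intros k. rewrite frac_word_splice. unfold splice, w. now destruct (k <? 2 * K + 1)%nat.
Qed.

Lemma small_base_absurd : d * d < INR beta -> False.
Proof.
  intros Hsq.
  destruct (exists_resolution_below_gap d (INR beta) n Hd Hsq) as [K HK].
  set (a := fun i => (2 * K + 1 + i)%nat).
  destruct (DS_splice_unit_words a K) as [i [j [fi [fj [Hij [Hfi [Hfj [Hsi [Hsj E]]]]]]]]].
  { intros; unfold a; lia. }
  rewrite (DS_ext _ (unit_word (a j))), DS_unit_word in E
    by (easy || intros; apply splice_unit_word_late; unfold a; lia).
  pose proof (frac_value_bounds beta Hbeta fi _ K Hfi Hsi).
  pose proof (frac_value_bounds beta Hbeta fj _ K Hfj Hsj).
  pose proof (inv_pow_sub_lower d (a i) (a j) Hd ltac:(unfold a; lia)).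
  pose proof (inv_pow_le_antimono d (S (a i)) (2 * K + 2 + n) ltac:(lra) ltac:(unfold a, n; lia)).
  assert ((d - 1) / d ^ (2 * K + 2 + n) <= (d - 1) / d ^ S (a i)).
  { unfold Rdiv. apply Rmult_le_compat_l; lra. }
  lra.
Qed.

Lemma large_base_absurd : INR beta < d * d -> False.
Proof.
  intros Hsq. assert (Hb : 0 < INR beta) by (apply (lt_INR 0); lia).
  destruct (exists_resolution_above_scale d (INR beta) n Hd (conj Hb Hsq)) as [K [HnK HK]].
  set (a := fun i => (2 * K - i)%nat).
  destruct (DS_splice_unit_words a K) as [i [j [fi [fj [Hij [Hfi [Hfj [Hsi [Hsj E]]]]]]]]].
  { intros; unfold a; lia. }
  rewrite (DS_ext _ (unit_word (a i))), DS_unit_word in E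
    by (easy || intros; apply splice_unit_word_early; unfold a, n in *; lia).
  assert (Hsmall : forall t, (t <= n)%nat -> / d ^ a t < / INR beta ^ K).
  { intros t Ht. eapply Rle_lt_trans; [|exact HK].
    apply inv_pow_le_antimono; [lra|unfold a; lia]. }
  rewrite (frac_prefix_zero beta Hbeta fi _ K Hfi Hsi),
    (frac_prefix_zero beta Hbeta fj _ K Hfj Hsj) in E by (apply Hsmall; unfold n; lia).
  assert (d ^ a j < d ^ a i) by (apply Rlt_pow; [lra|unfold a, n in *; lia]).
  assert (0 < d ^ a j) by (apply pow_lt; lra).
  assert (/ d ^ a i < / d ^ a j) by (apply Rinv_0_lt_contravar; lra).
  lra.
Qed.

End Recognizer.

Theorem theorem8 (d : R) (mu : nat)
  (hd1 : 1 < d)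
  (hrat : exists (p q : Z), (q <> 0)%Z /\ d = IZR p / IZR q)
  (hnonint : ~ exists n : Z, d = IZR n)
  (hmu : (Rceil d - 1 <= Z.of_nat mu)%Z) :
  forall beta : nat, (2 <= beta)%nat ->
    ~ omega_regular mu (fun A => DS A d) beta.
Proof.
  intros beta Hbeta [B HB].
  assert (Hmu : (1 <= mu)%nat) by (pose proof (Rceil_ge_2 d hd1); lia).
  destruct (Rtotal_order (d * d) (INR beta)) as [Hlt|[Heq|Hgt]].
  - exact (small_base_absurd d mu beta B hd1 Hmu Hbeta HB Hlt).
  - apply hnonint, (rational_sqrt_integral d (Z.of_nat beta) hrat).
    now rewrite <- INR_IZR_INZ.
  - exact (large_base_absurd d mu beta B hd1 Hmu Hbeta HB Hgt).
Qed.
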